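(* Let $G$ be a simple cubic graph and $(G',r)$ be constructed from $G$ as described in the context. Then there exists a minimum-size vector connectivity set $S$ for $(G',r)$ that contains no vertex of the form $w_{x,e}$ or $w_e$ (for $e\in E(G)$, $x$ an endpoint of $e$).
   Context: Construction of $G'$ from a cubic graph $G$: start with $G$. (1) For each edge $e=xy$ of $G$, delete $xy$, add three new vertices $w_{x,e},w_e,w_{y,e}$ and the edges $xw_{x,e}, w_{x,e}w_e, w_ew_{y,e}, w_{y,e}y$. (2) For each edge $e=xy$ of $G$, add two new vertices $z_{x,e},z_{y,e}$ and the edges $w_{x,e}z_{x,e}, z_{x,e}w_e, w_ez_{y,e}, z_{y,e}w_{y,e}$. (3) For every vertex $x$ of $G$ with incident edges $e,f,g$, add the edges $w_{x,e}w_{x,f}, w_{x,e}w_{x,g}, w_{x,f}w_{x,g}$. Requirements: for every edge $e=xy$ of $G$, $r(w_{x,e})=r(w_{y,e})=4$ and $r(w_e)=3$; $r(v')=0$ for all other vertices of $G'$. For $S\subseteq V(G')$ and $v\in V(G')\setminus S$, a $v$--$S$ fan of order $k$ is a collection of $k$ paths, each connecting $v$ to a vertex of $S$, pairwise vertex-disjoint except at $v$; $v$ is $k$-linked to $S$ if such a fan exists. A vector connectivity set for $(G',r)$ is a set $S$ such that every $v\in V(G')\setminus S$ is $r(v)$-linked to $S$. *)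

From mathcomp Require Import all_boot.
Set Implicit Arguments. Unset Strict Implicit. Unset Printing Implicit Defensive.

Definition simple_graph (V : finType) (adj : rel V) : Prop :=
  irreflexive adj /\ symmetric adj.

Definition cubic (V : finType) (adj : rel V) : Prop :=
  forall x : V, #|[set y | adj x y]| = 3.

Section Construction.
Variables (V : finType) (adj : rel V).

(* Raw vertex labels of G':
   inl (inl x)        : original vertex x of G
   inl (inr (x, y))   : w_{x,e}   for e = xy
   inr (inl A)        : w_e       for e = A = {x,y}
   inr (inr (x, y))   : z_{x,e}   for e = xy *)
Definition rawG' : finType := (V + (V * V) + ({set V} + (V * V)))%type.

Definition validG' (u : rawG') : bool :=
  match u with
  | inl (inl _) => true
  | inl (inr (x, y)) => adj x y
  | inr (inl A) => [exists x, exists y, adj x y && (A == [set x; y])]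
  | inr (inr (x, y)) => adj x y
  end.

Definition VG' : finType := {u : rawG' | validG' u}.

Definition edge0 (u v : rawG') : bool :=
  match u, v with
  | inl (inl x), inl (inr (a, b)) => (a == x) && adj a b
  | inl (inr (a, b)), inr (inl A) => adj a b && (A == [set a; b])
  | inl (inr (a, b)), inr (inr (c, d)) => [&& a == c, b == d & adj a b]
  | inr (inr (c, d)), inr (inl A) => adj c d && (A == [set c; d])
  (* step (3): triangle on w_{x,e}, w_{x,f}, w_{x,g} *)
  | inl (inr (a, b)), inl (inr (c, d)) => [&& a == c, b != d, adj a b & adj c d]
  | _, _ => false
  end.

Definition adjG' : rel VG' :=
  fun u v => edge0 (val u) (val v) || edge0 (val v) (val u).

Definition is_w (u : VG') : bool :=
  match val u with
  | inl (inr _) => true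
  | inr (inl _) => true
  | _ => false
  end.

Definition rG' (u : VG') : nat :=
  match val u with
  | inl (inr _) => 4
  | inr (inl _) => 3
  | _ => 0
  end.

End Construction.

Section VectorConnectivity.
Variables (W : finType) (e : rel W).

Definition vS_path (S : {set W}) (v : W) (p : seq W) : bool :=
  [&& p != [::], path e v p & last v p \in S].

(* v is k-linked to S: there is a v--S fan of order k, i.e. k paths from v
   to S, pairwise vertex-disjoint except at v (the paths are given by their
   vertex lists after v). *)
Definition k_linked (S : {set W}) (v : W) (k : nat) : Prop :=
  exists ps : seq (seq W),
    [/\ size ps = k, all (vS_path S v) ps &
        pairwise (fun p q => all (fun x => x \notin q) p) ps].

Definition vc_set (r : W -> nat) (S : {set W}) : Prop :=
  forall v, v \notin S -> k_linked S v (r v).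

Definition min_vc_set (r : W -> nat) (S : {set W}) : Prop :=
  vc_set r S /\ forall S' : {set W}, vc_set r S' -> #|S| <= #|S'|.

End VectorConnectivity.

From mathcomp Require Import all_boot.
From Stdlib Require Import Classical.
Set Implicit Arguments. Unset Strict Implicit. Unset Printing Implicit Defensive.

(* A separator argument shows that every vector connectivity set S meets
   {x, w_{x,e}, z_{x,e}} for each edge e at x (otherwise w_e, w_{x,f}, w_{x,g}
   separate w_{x,e}, which needs 4 paths, from S), and meets
   {w_{x,e}, w_{y,e}, w_e, z_{x,e}, z_{y,e}} for each edge e = xy (otherwise
   w_{x,e}, w_{y,e} separate w_e, which needs 3).  Moving each w_{x,e} of S to
   z_{x,e} and each w_e to z_{x,e} for one endpoint x does not enlarge S and
   keeps both covering properties.  Conversely, a set with these properties is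
   a vector connectivity set: around the gadgets one builds 4 disjoint paths
   from each w_{x,e} and 3 from each w_e, ending at some z or original vertex.
   Shifting a minimum vector connectivity set thus gives the required one. *)

Section Separators.
Variables (W : finType) (e : rel W).

Lemma path_exits_region (S C Q : {set W}) :
  [disjoint C & S] ->
  (forall u w, u \in C -> e u w -> (w \in C) || (w \in Q)) ->
  forall p u, u \in C -> path e u p -> last u p \in S -> has (mem Q) p.
Proof.
move=> CS closedC; elim=> [|w p IH] u uC /=.
  by move=> _ uS; rewrite (disjointFr CS uC) in uS.
case/andP=> euw pw lS; case/orP: (closedC u w uC euw) => [wC|->] //.
by rewrite (IH w wC pw lS) orbT.
Qed.

Lemma disjoint_paths_card (ps : seq (seq W)) (Q : {set W}) :
  all (has (mem Q)) ps -> pairwise (fun p q => all (fun x => x \notin q) p) ps ->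
  size ps <= #|Q|.
Proof.
elim: ps Q => [|p ps IH] Q //= /andP[/hasP[u up uQ] hitQ] /andP[/allP disj_p pw].
rewrite (cardsD1 u Q) (uQ : u \in Q) add1n ltnS; apply: IH pw; apply/allP => q qps.
case/hasP: (allP hitQ q qps) => w wq wQ; apply/hasP; exists w => //.
rewrite !inE (wQ : w \in Q) andbT; apply: contraTneq wq => ->.
exact: (allP (disj_p q qps) u up).
Qed.

Lemma separated_not_k_linked (S C Q : {set W}) v k :
  v \in C -> [disjoint C & S] ->
  (forall u w, u \in C -> e u w -> (w \in C) || (w \in Q)) ->
  #|Q| < k -> ~ k_linked e S v k.
Proof.
move=> vC CS closedC ltQk [ps [szk fan pw]]; move: ltQk; rewrite -szk ltnNge.
apply/negP/negPn; apply: disjoint_paths_card pw; apply/allP => p pps.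
case/and3P: (allP fan p pps) => _ pp lp.
exact: path_exits_region CS closedC _ _ vC pp lp.
Qed.

End Separators.

Lemma pairwise_disjoint_of_regions (W U : eqType) (f : W -> U)
    (ps : seq (seq W)) (Rs : seq (seq U)) :
  all2 (fun p R => all (fun u => f u \in R) p) ps Rs ->
  pairwise (fun R R' => all (fun r => r \notin R') R) Rs ->
  pairwise (fun p q => all (fun u => u \notin q) p) ps.
Proof.
elim: ps Rs => [|p ps IH] [|R Rs] //= /andP[pR inRs] /andP[disjR pwRs].
rewrite (IH Rs inRs pwRs) andbT.
elim: ps Rs inRs disjR {IH pwRs} => [|q ps IH] [|R' Rs] //=.
move=> /andP[qR' inRs] /andP[disjRR' disjR].
rewrite (IH Rs inRs disjR) andbT; apply/allP => u up; apply/negP => uq.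
by move: (allP disjRR' _ (allP pR u up)); rewrite (allP qR' u uq).
Qed.

Lemma all_in_cons (W U : eqType) (f : W -> U) (a : W) (R : seq U) (p : seq W) :
  all (fun u => f u \in R) p -> all (fun u => f u \in f a :: R) (a :: p).
Proof.
by move=> /allP pR; rewrite /= mem_head; apply/allP => u /pR uR; rewrite inE uR orbT.
Qed.

Lemma exists_min_card (T : finType) (P : {set T} -> Prop) (A : {set T}) :
  P A -> exists S, P S /\ forall S', P S' -> #|S| <= #|S'|.
Proof.
elim: #|A| {-2}A (leqnn #|A|) => [|n IH] S leSn PS.
  by exists S; split=> // S' _; rewrite (leq_trans leSn).
have [[S' PS' ltS'S] | nosmaller] := classic (exists2 S', P S' & #|S'| < #|S|).
  by apply: (IH S') => //; rewrite -ltnS (leq_trans ltS'S).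
exists S; split=> // S' PS'; rewrite leqNgt; apply/negP => ltS'S.
by apply: nosmaller; exists S'.
Qed.

Lemma inl_eq_inr (A B : eqType) (a : A) (b : B) : (inl a == inr b :> A + B) = false.
Proof. by []. Qed.

Lemma inr_eq_inl (A B : eqType) (a : A) (b : B) : (inr b == inl a :> A + B) = false.
Proof. by []. Qed.

Lemma eq_set2_cases (T : finType) (x y a b : T) : a != b ->
  [set x; y] = [set a; b] -> (a = x /\ b = y) \/ (a = y /\ b = x).
Proof.
move=> nab E; have: a \in [set x; y] by rewrite E set21.
have: b \in [set x; y] by rewrite E set22.
rewrite !inE => hb ha; move: ha hb nab => /orP[]/eqP-> /orP[]/eqP->; rewrite ?eqxx //;
  by auto.
Qed.

Lemma set2_eq2rF (T : finType) (x a b : T) : a != x -> a != b ->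
  ([set x; a] == [set x; b]) = false.
Proof.
move=> nax nab; apply/negbTE/eqP => E.
have: a \in [set x; b] by rewrite -E set22.
by rewrite !inE (negbTE nax) (negbTE nab).
Qed.

Section Construction.
Variables (V : finType) (adj : rel V).
Hypothesis adj_irr : irreflexive adj.
Hypothesis adj_sym : symmetric adj.
Hypothesis adj_cubic : cubic adj.

Local Notation G := (VG' adj).
Local Notation e := (@adjG' V adj).

Local Notation rawX x := (inl (inl x) : rawG' V).
Local Notation rawW x y := (inl (inr (x, y)) : rawG' V).
Local Notation rawE x y := (inr (inl [set x; y]) : rawG' V).
Local Notation rawZ x y := (inr (inr (x, y)) : rawG' V).

Definition vtx (x : V) : G := @Sub _ _ G (rawX x) isT.
Definition wx x y (h : adj x y) : G := @Sub _ _ G (rawW x y) h.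
Definition zx x y (h : adj x y) : G := @Sub _ _ G (rawZ x y) h.

Lemma valid_we x y : adj x y -> validG' adj (rawE x y).
Proof. by move=> h; apply/existsP; exists x; apply/existsP; exists y; rewrite h eqxx. Qed.

Definition we x y (h : adj x y) : G := @Sub _ _ G _ (valid_we h).

Lemma adj_neq x y : adj x y -> x != y.
Proof. by apply: contraTneq => ->; rewrite adj_irr. Qed.

Lemma wx_eq x y y' (h : adj x y) (h' : adj x y') : (wx h == wx h') = (y == y').
Proof. by rewrite -(inj_eq val_inj); apply/eqP/eqP => [[]|/= ->]. Qed.

Lemma we_sym x y (h : adj x y) (h' : adj y x) : we h = we h'.
Proof. by apply: val_inj; rewrite /= setUC. Qed.

Lemma adjG'_sym : symmetric e.
Proof. by move=> u w; rewrite /adjG' orbC. Qed.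

Lemma adj_wx_zx x y (h : adj x y) : e (wx h) (zx h).
Proof. by rewrite /adjG' /= !eqxx h. Qed.

Lemma adj_wx_vtx x y (h : adj x y) : e (wx h) (vtx x).
Proof. by rewrite /adjG' /= eqxx h. Qed.

Lemma adj_wx_we x y (h : adj x y) : e (wx h) (we h).
Proof. by rewrite /adjG' /= eqxx h. Qed.

Lemma adj_zx_we x y (h : adj x y) : e (zx h) (we h).
Proof. by rewrite /adjG' /= eqxx h. Qed.

Lemma adj_wx_wx x y y' (h : adj x y) (h' : adj x y') : y' != y -> e (wx h) (wx h').
Proof. by move=> ny'y; rewrite /adjG' /= eqxx eq_sym ny'y h h'. Qed.

Lemma vtx_nbr x w : e (vtx x) w -> exists y (h : adj x y), w = wx h.
Proof.
case: w => [[[x'|[a b]]|[A|[c d]]] hv]; rewrite /adjG' /= ?orbF //.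
by case/andP=> /eqP eax hab; subst a; exists b, hab; apply: val_inj.
Qed.

Lemma wx_nbr x y (h : adj x y) w : e (wx h) w ->
  [\/ w = vtx x, w = we h, w = zx h |
      exists y' (h' : adj x y'), y' != y /\ w = wx h'].
Proof.
case: w => [[[x'|[a b]]|[A|[c d]]] hv]; rewrite /adjG' /= ?orbF //=.
- by case/andP=> /eqP exa _; subst x'; constructor 1; apply: val_inj.
- case/orP=> [/and4P[/eqP eax nb _ _]|/and4P[/eqP eax nb _ _]]; subst a;
    constructor 4; exists b, hv; split=> //; by rewrite eq_sym.
- by case/andP=> _ /eqP eA; subst A; constructor 2; apply: val_inj.
- by case/and3P=> /eqP exc /eqP eyd _; subst c d; constructor 3; apply: val_inj.
Qed.

Lemma zx_nbr x y (h : adj x y) w : e (zx h) w -> w = wx h \/ w = we h.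
Proof.
case: w => [[[x'|[a b]]|[A|[c d]]] hv]; rewrite /adjG' /= ?orbF //=.
- by case/and3P=> /eqP exa /eqP eyb _; subst a b; left; apply: val_inj.
- by case/andP=> _ /eqP eA; subst A; right; apply: val_inj.
Qed.

Lemma we_nbr x y (h : adj x y) (h' : adj y x) w : e (we h) w ->
  [\/ w = wx h, w = wx h', w = zx h | w = zx h'].
Proof.
case: w => [[[x'|[a b]]|[A|[c d]]] hv]; rewrite /adjG' /= ?orbF //=.
- case/andP=> hab /eqP/(eq_set2_cases (adj_neq hab)) [[ea eb]|[ea eb]]; subst a b.
  + by constructor 1; apply: val_inj.
  + by constructor 2; apply: val_inj.
- case/andP=> hcd /eqP/(eq_set2_cases (adj_neq hcd)) [[ec ed]|[ec ed]]; subst c d.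
  + by constructor 3; apply: val_inj.
  + by constructor 4; apply: val_inj.
Qed.

Lemma other_nbrs x y : adj x y -> exists y1 y2,
  [/\ adj x y1, adj x y2, y1 != y, y2 != y &
   y1 != y2 /\ forall y', adj x y' -> [\/ y' = y, y' = y1 | y' = y2]].
Proof.
move=> h; set A := [set y' | adj x y'].
have yA : y \in A by rewrite inE.
have : #|A :\ y| == 2.
  by move: (adj_cubic x); rewrite -/A (cardsD1 y A) yA add1n => [[->]].
case/cards2P=> y1 [y2 [n12 EA]].
have : y1 \in A :\ y by rewrite EA set21.
have : y2 \in A :\ y by rewrite EA set22.
rewrite !inE => /andP[n2 a2] /andP[n1 a1].
exists y1, y2; split=> //; split=> // y' hy'.
case: (eqVneq y' y) => [->|ny]; first by constructor 1.
have : y' \in A :\ y by rewrite !inE ny hy'.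
by rewrite EA !inE => /orP[]/eqP->; [constructor 2|constructor 3].
Qed.

Local Notation vc := (vc_set e (@rG' V adj)).

Lemma vc_meets_vtx_wx_zx (S : {set G}) x y (h : adj x y) :
  vc S -> [|| vtx x \in S, wx h \in S | zx h \in S].
Proof.
move=> vcS; apply/negPn/negP; rewrite !negb_or => /and3P[nX nW nZ].
have [y1 [y2 [h1 h2 n1 n2 [_ nbrs]]]] := other_nbrs h.
apply: (separated_not_k_linked (C := [set u in [:: wx h; vtx x; zx h]])
                               (Q := [set u in [:: we h; wx h1; wx h2]]) _ _ _ _ (vcS _ nW)).
- by rewrite !inE eqxx.
- by rewrite disjoints_subset; apply/subsetP => u; rewrite !inE => /or3P[]/eqP->.
- move=> u w; rewrite !inE => /or3P[]/eqP->.
  + case/wx_nbr=> [->|->|->|[y' [h' [ny' ->]]]]; rewrite ?eqxx ?orbT //.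
    by case: (nbrs y' h') ny' => ?; subst y'; rewrite ?eqxx // !wx_eq eqxx ?orbT.
  + case/vtx_nbr=> y' [h' ->].
    by case: (nbrs y' h') => ?; subst y'; rewrite !wx_eq eqxx ?orbT.
  + by case/zx_nbr=> ->; rewrite eqxx ?orbT.
- by rewrite cardsE (leq_ltn_trans (card_size _)).
Qed.

Lemma vc_meets_edge_gadget (S : {set G}) x y (h : adj x y) (h' : adj y x) :
  vc S -> [|| wx h \in S, wx h' \in S, we h \in S, zx h \in S | zx h' \in S].
Proof.
move=> vcS; apply/negPn/negP; rewrite !negb_or => /and5P[nW nW' nE nZ nZ'].
apply: (separated_not_k_linked (C := [set u in [:: we h; zx h; zx h']])
                               (Q := [set u in [:: wx h; wx h']]) _ _ _ _ (vcS _ nE)).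
- by rewrite !inE eqxx.
- by rewrite disjoints_subset; apply/subsetP => u; rewrite !inE => /or3P[]/eqP->.
- move=> u w; rewrite !inE => /or3P[]/eqP->.
  + by case/(we_nbr h')=> ->; rewrite eqxx ?orbT.
  + by case/zx_nbr=> ->; rewrite eqxx ?orbT.
  + by case/zx_nbr=> ->; rewrite ?(we_sym h' h) eqxx ?orbT.
- by rewrite cardsE (leq_ltn_trans (card_size _)).
Qed.

(* The [None] branch is never taken on a valid w_e. *)
Definition shift_raw (r : rawG' V) : rawG' V :=
  match r with
  | inl (inr xy) => inr (inr xy)
  | inr (inl A) =>
      if [pick xy : V * V | adj xy.1 xy.2 && (A == [set xy.1; xy.2])] is Some xy
      then inr (inr xy) else r
  | _ => r
  end.

Definition shift (u : G) : G := insubd u (shift_raw (val u)).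

Lemma shift_vtx x : shift (vtx x) = vtx x.
Proof. by apply: val_inj; rewrite val_insubd. Qed.

Lemma shift_zx x y (h : adj x y) : shift (zx h) = zx h.
Proof. by apply: val_inj; rewrite val_insubd /= h. Qed.

Lemma shift_wx x y (h : adj x y) : shift (wx h) = zx h.
Proof. by apply: val_inj; rewrite val_insubd /= h. Qed.

Lemma shift_we x y (h : adj x y) (h' : adj y x) :
  shift (we h) = zx h \/ shift (we h) = zx h'.
Proof.
rewrite /shift /=; case: pickP => [[a b] /andP[/= hab /eqP E]|none]; last first.
  by have := none (x, y); rewrite /= h eqxx.
by case: (eq_set2_cases (adj_neq hab) E) => [[ea eb]|[ea eb]]; subst a b;
  [left|right]; apply: val_inj; rewrite val_insubd /= hab.
Qed.

Lemma shift_not_w u : ~~ is_w (shift u).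
Proof.
rewrite /is_w /shift val_insubd.
case: u => [[[x|[a b]]|[A|[c d]]] hv] /=.
- by [].
- by rewrite (hv : adj a b).
- case: pickP => [[a b] /andP[/= hab _]|none]; first by rewrite hab.
  case/existsP: hv => x /existsP [y /andP [hxy /eqP EA]].
  by have := none (x, y); rewrite /= hxy EA eqxx.
- by case: ifP.
Qed.

Lemma shift_cover_vtx (S : {set G}) x y (h : adj x y) :
  vc S -> (vtx x \in shift @: S) || (zx h \in shift @: S).
Proof.
move=> vcS; case/or3P: (vc_meets_vtx_wx_zx h vcS) => /(imset_f shift).
- by rewrite shift_vtx => ->.
- by rewrite shift_wx => ->; rewrite orbT.
- by rewrite shift_zx => ->; rewrite orbT.
Qed.

Lemma shift_cover_edge (S : {set G}) x y (h : adj x y) (h' : adj y x) :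
  vc S -> (zx h \in shift @: S) || (zx h' \in shift @: S).
Proof.
move=> vcS; have := vc_meets_edge_gadget h h' vcS.
case/or4P=> [|||/orP[]] /(imset_f shift).
- by rewrite shift_wx => ->.
- by rewrite shift_wx => ->; rewrite orbT.
- by case: (shift_we h h') => -> ->; rewrite ?orbT.
- by rewrite shift_zx => ->.
- by rewrite shift_zx => ->; rewrite orbT.
Qed.

Section Fans.
Variable T : {set G}.
Hypothesis T_cover_edge :
  forall x y (h : adj x y) (h' : adj y x), (zx h \in T) || (zx h' \in T).
Hypothesis T_cover_vtx : forall x y (h : adj x y), (vtx x \in T) || (zx h \in T).

Local Notation fan_path := (vS_path e T).
Local Notation inside R p := (all (fun u : G => val u \in R) p).

Lemma fan_path_cons v u p : e v u -> fan_path u p -> fan_path v (u :: p).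
Proof. by move=> vu /and3P[_ pp lp]; rewrite /vS_path /= vu pp lp. Qed.

Lemma route_wx_home x y (h : adj x y) :
  exists2 p, fan_path (wx h) p & inside [:: rawZ x y; rawX x] p.
Proof.
have [ZT|ZnT] := boolP (zx h \in T).
  by exists [:: zx h]; rewrite /vS_path /= ?adj_wx_zx ?inE ?eqxx.
have XT : vtx x \in T by move: (T_cover_vtx h); rewrite (negbTE ZnT) orbF.
by exists [:: vtx x]; rewrite /vS_path /= ?adj_wx_vtx ?inE ?eqxx ?orbT.
Qed.

Lemma route_we_far x y (h : adj x y) (h' : adj y x) :
  exists2 p, fan_path (we h) p & inside [:: rawZ y x; rawW y x; rawX y] p.
Proof.
rewrite (we_sym h h').
have [ZT|ZnT] := boolP (zx h' \in T).
  by exists [:: zx h']; rewrite /vS_path /= ?inE ?eqxx // adjG'_sym adj_zx_we.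
have YT : vtx y \in T by move: (T_cover_vtx h'); rewrite (negbTE ZnT) orbF.
exists [:: wx h'; vtx y]; rewrite /vS_path /= ?inE ?eqxx ?orbT //.
by rewrite adjG'_sym adj_wx_we adj_wx_vtx.
Qed.

Lemma route_wx_far x y (h : adj x y) (h' : adj y x) :
  exists2 p, fan_path (wx h) p & inside [:: rawZ x y; rawE x y; rawZ y x] p.
Proof.
have [ZT|ZnT] := boolP (zx h \in T).
  by exists [:: zx h]; rewrite /vS_path /= ?adj_wx_zx ?inE ?eqxx.
have Z'T : zx h' \in T by move: (T_cover_edge h h'); rewrite (negbTE ZnT).
exists [:: we h; zx h']; rewrite /vS_path /= ?inE ?eqxx ?orbT //.
by rewrite adj_wx_we (we_sym h h') adjG'_sym adj_zx_we.
Qed.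

(* Regions are lists of raw labels: deciding their disjointness on labels avoids
   comparing proof-carrying vertices of G'. *)
Local Notation disjoint_regions :=
  (pairwise (fun R R' : seq (rawG' V) => all (fun r => r \notin R') R)).

Lemma wx_fan_regions x y y1 y2 : x != y -> x != y1 -> x != y2 ->
  y1 != y -> y2 != y -> y1 != y2 -> disjoint_regions
    [:: [:: rawZ x y; rawX x];
        rawE x y :: [:: rawZ y x; rawW y x; rawX y];
        rawW x y1 :: [:: rawZ x y1; rawE x y1; rawZ y1 x];
        rawW x y2 :: [:: rawZ x y2; rawE x y2; rawZ y2 x]].
Proof.
move=> nxy nx1 nx2 n1 n2 n12.
rewrite /= !inE !(inj_eq inl_inj, inj_eq inr_inj, inl_eq_inr, inr_eq_inl) ?xpair_eqE.
rewrite ?(eq_sym y x, eq_sym y1 x, eq_sym y2 x, eq_sym y y1, eq_sym y y2, eq_sym y2 y1).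
rewrite !set2_eq2rF ?eqxx
  ?(negbTE nxy, negbTE nx1, negbTE nx2, negbTE n1, negbTE n2, negbTE n12) //.
all: by rewrite eq_sym.
Qed.

Lemma we_fan_regions x y y1 : x != y -> x != y1 -> y1 != y -> disjoint_regions
    [:: [:: rawZ x y];
        rawW x y :: rawW x y1 :: [:: rawZ x y1; rawE x y1; rawZ y1 x];
        [:: rawZ y x; rawW y x; rawX y]].
Proof.
move=> nxy nx1 n1.
rewrite /= !inE !(inj_eq inl_inj, inj_eq inr_inj, inl_eq_inr, inr_eq_inl) ?xpair_eqE.
rewrite ?(eq_sym y x, eq_sym y1 x, eq_sym y y1).
by rewrite ?eqxx ?(negbTE nxy, negbTE nx1, negbTE n1).
Qed.

Lemma fan_wx x y (h : adj x y) : k_linked e T (wx h) 4.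
Proof.
have h' : adj y x by rewrite adj_sym.
have [y1 [y2 [h1 h2 n1 n2 [n12 _]]]] := other_nbrs h.
have h1' : adj y1 x by rewrite adj_sym.
have h2' : adj y2 x by rewrite adj_sym.
have [p1 P1 R1] := route_wx_home h.
have [p2 P2 R2] := route_we_far h h'.
have [p3 P3 R3] := route_wx_far h1 h1'.
have [p4 P4 R4] := route_wx_far h2 h2'.
exists [:: p1; we h :: p2; wx h1 :: p3; wx h2 :: p4]; split => //.
- by rewrite /= P1 (fan_path_cons (adj_wx_we h) P2)
     (fan_path_cons (adj_wx_wx h h1 n1) P3) (fan_path_cons (adj_wx_wx h h2 n2) P4).
- apply: (pairwise_disjoint_of_regions (f := val)); last first.
    exact: wx_fan_regions (adj_neq h) (adj_neq h1) (adj_neq h2) n1 n2 n12.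
  by move: R1 (all_in_cons (we h) R2) (all_in_cons (wx h1) R3)
    (all_in_cons (wx h2) R4) => /= -> -> -> ->.
Qed.

Lemma fan_we x y (h : adj x y) (h' : adj y x) : zx h \in T -> k_linked e T (we h) 3.
Proof.
move=> ZT; have [y1 [y2 [h1 _ n1 _ _]]] := other_nbrs h.
have h1' : adj y1 x by rewrite adj_sym.
have [p2 P2 R2] := route_wx_far h1 h1'.
have [p3 P3 R3] := route_we_far h h'.
exists [:: [:: zx h]; wx h :: wx h1 :: p2; p3]; split => //.
- have P1 : fan_path (we h) [:: zx h] by rewrite /vS_path /= ZT adjG'_sym adj_zx_we.
  by rewrite /= P1 P3 (fan_path_cons _ (fan_path_cons (adj_wx_wx h h1 n1) P2))
    // adjG'_sym adj_wx_we.
- apply: (pairwise_disjoint_of_regions (f := val)); last first.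
    exact: we_fan_regions (adj_neq h) (adj_neq h1) n1.
  by move: R3 (all_in_cons (wx h) (all_in_cons (wx h1) R2)) => /= -> ->;
    rewrite mem_head.
Qed.

Lemma vc_of_cover : vc T.
Proof.
case=> [[[x|[x y]]|[A|[x y]]] hv] _ /=.
- by exists [::].
- exact: (fan_wx hv).
- case/existsP: (hv) => x /existsP [y /andP [hxy /eqP EA]]; subst A.
  have hyx : adj y x by rewrite adj_sym.
  have -> : exist _ (rawE x y) hv = we hxy :> G by apply: val_inj.
  case/orP: (T_cover_edge hxy hyx) => [ZT|ZT]; first exact: fan_we.
  by rewrite (we_sym hxy hyx); apply: fan_we.
- by exists [::].
Qed.

End Fans.

Theorem exists_min_vc_set_avoiding_w :
  exists S : {set G}, min_vc_set e (@rG' V adj) S /\ forall u, u \in S -> ~~ is_w u.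
Proof.
have vcT : vc setT by move=> v; rewrite inE.
have [S [vcS minS]] := exists_min_card vcT.
exists (shift @: S); split; last by move=> _ /imsetP[u _ ->]; exact: shift_not_w.
split; last by move=> S' /minS; apply: leq_trans (leq_imset_card _ _).
apply: vc_of_cover => [x y h h'|x y h]; [exact: shift_cover_edge | exact: shift_cover_vtx].
Qed.

End Construction.

Theorem mainTheorem5 (V : finType) (adj : rel V) :
  simple_graph adj -> cubic adj ->
  exists S : {set VG' adj},
    min_vc_set (@adjG' V adj) (@rG' V adj) S /\
    (forall u, u \in S -> ~~ is_w u).
Proof. by move=> [adj_irr adj_sym] adj_cubic; exact: exists_min_vc_set_avoiding_w. Qed.
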